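(* For every process $p$ of any LTS and every closed $\varphi\in\mathrm{sHML}$, the following are equivalent: (i) $p\in[\![\varphi]\!]_B$; (ii) every finfinite trace $g$ produced by $p$ satisfies $g\in[\![\varphi]\!]_F$.
   Context: Fix a finite set $\mathrm{Act}$ of actions, $\tau\notin\mathrm{Act}$. $\mathrm{sHML}$: $\varphi::=\mathrm{tt}\mid\mathrm{ff}\mid[A]\varphi\mid\varphi\wedge\varphi\mid\max X.\varphi\mid X$ ($A\subseteq\mathrm{Act}$, guarded). Branching-time semantics over an LTS $(\mathrm{Proc},\mathrm{Act}\cup\{\tau\},\to)$, with $p\overset{a}{\Longrightarrow}q$ iff $p(\xrightarrow{\tau})^*\xrightarrow{a}(\xrightarrow{\tau})^*q$: $[\![\mathrm{tt}]\!]_B=\mathrm{Proc}$, $[\![\mathrm{ff}]\!]_B=\emptyset$, $\wedge$ is intersection, $[\![[A]\varphi,\rho]\!]_B=\{p\mid\forall a\in A,\forall q.\ p\overset{a}{\Longrightarrow}q\Rightarrow q\in[\![\varphi,\rho]\!]_B\}$, $[\![\max X.\varphi,\rho]\!]_B=\bigcup\{S\mid S\subseteq[\![\varphi,\rho[X\mapsto S]]\!]_B\}$, $[\![X,\rho]\!]_B=\rho(X)$. Finfinite traces $\mathrm{Fin}=\mathrm{Act}^\omega\cup\mathrm{Act}^*$; finfinite semantics: $[\![\mathrm{tt}]\!]_F=\mathrm{Fin}$, $[\![\mathrm{ff}]\!]_F=\emptyset$, $\wedge$ intersection, $[\![[A]\varphi,\sigma]\!]_F=\{g\mid\forall a\in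 A,\forall g'.\ g=ag'\Rightarrow g'\in[\![\varphi,\sigma]\!]_F\}$ (so the empty trace satisfies every $[A]\varphi$), $[\![\max X.\varphi,\sigma]\!]_F=\bigcup\{S\subseteq\mathrm{Fin}\mid S\subseteq[\![\varphi,\sigma[X\mapsto S]]\!]_F\}$, $[\![X,\sigma]\!]_F=\sigma(X)$. A process $p$ produces a finite trace $s\in\mathrm{Act}^*$ if $p\overset{s}{\Longrightarrow}q$ for some $q$ (composition of weak steps), and produces an infinite trace $a_1a_2\cdots$ if there are $p=p_0,p_1,\ldots$ with $p_{i-1}\overset{a_i}{\Longrightarrow}p_i$ for all $i\ge1$. *)

From mathcomp Require Import all_boot.
From Stdlib Require Import Relations.
Set Implicit Arguments. Unset Strict Implicit. Unset Printing Implicit Defensive.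

Inductive shml (Act : finType) : Type :=
| Stt
| Sff
| Sbox of {set Act} & shml Act
| Sand of shml Act & shml Act
| Smax of nat & shml Act
| Svar of nat.
Arguments Stt {Act}. Arguments Sff {Act}. Arguments Svar {Act}.

Fixpoint fv (Act : finType) (phi : shml Act) : seq nat :=
  match phi with
  | Stt | Sff => [::]
  | Sbox _ psi => fv psi
  | Sand psi chi => fv psi ++ fv chi
  | Smax X psi => filter (fun Y => Y != X) (fv psi)
  | Svar X => [:: X]
  end.

Definition shml_closed (Act : finType) (phi : shml Act) : Prop := fv phi = [::].

Fixpoint guarded_in (Act : finType) (X : nat) (phi : shml Act) : bool :=
  match phi with
  | Stt | Sff => true
  | Sbox _ _ => true
  | Sand psi chi => guarded_in X psi && guarded_in X chi
  | Smax Y psi => (Y == X) || guarded_in X psi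
  | Svar Y => Y != X
  end.

Fixpoint guarded (Act : finType) (phi : shml Act) : bool :=
  match phi with
  | Stt | Sff | Svar _ => true
  | Sbox _ psi => guarded psi
  | Sand psi chi => guarded psi && guarded chi
  | Smax X psi => guarded_in X psi && guarded psi
  end.

Definition upd (T : Type) (rho : nat -> T -> Prop) (X : nat) (S : T -> Prop)
  : nat -> T -> Prop := fun Y => if Y == X then S else rho Y.

(* LTS over Act ∪ {τ}: labels are option Act, with None = τ. *)
Section LTS.
Variables (Act : finType) (Proc : Type) (step : Proc -> option Act -> Proc -> Prop).

Definition tau_step (p q : Proc) : Prop := step p None q.

Definition wstep (p : Proc) (a : Act) (q : Proc) : Prop :=
  exists p1 p2, clos_refl_trans Proc tau_step p p1 /\ step p1 (Some a) p2 /\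
                clos_refl_trans Proc tau_step p2 q.

Fixpoint wsteps (p : Proc) (s : seq Act) (q : Proc) : Prop :=
  match s with
  | [::] => p = q
  | a :: s' => exists r, wstep p a r /\ wsteps r s' q
  end.

Fixpoint semB (phi : shml Act) (rho : nat -> Proc -> Prop) : Proc -> Prop :=
  match phi with
  | Stt => fun _ => True
  | Sff => fun _ => False
  | Sbox A psi => fun p => forall a, a \in A -> forall q, wstep p a q -> semB psi rho q
  | Sand psi chi => fun p => semB psi rho p /\ semB chi rho p
  | Smax X psi => fun p => exists S : Proc -> Prop,
                    S p /\ (forall q, S q -> semB psi (upd rho X S) q)
  | Svar X => rho X
  end.
End LTS.

(* finfinite traces Act^* ∪ Act^ω *)
Inductive fin_trace (Act : Type) : Type :=
| Tfin of seq Act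
| Tinf of (nat -> Act).

Definition tcons (Act : Type) (a : Act) (g : fin_trace Act) : fin_trace Act :=
  match g with
  | Tfin s => Tfin (a :: s)
  | Tinf f => Tinf (fun n => match n with 0 => a | k.+1 => f k end)
  end.

Fixpoint semF (Act : finType) (phi : shml Act) (sigma : nat -> fin_trace Act -> Prop)
  : fin_trace Act -> Prop :=
  match phi with
  | Stt => fun _ => True
  | Sff => fun _ => False
  | Sbox A psi => fun g => forall a, a \in A -> forall g', g = tcons a g' -> semF psi sigma g'
  | Sand psi chi => fun g => semF psi sigma g /\ semF chi sigma g
  | Smax X psi => fun g => exists S : fin_trace Act -> Prop,
                    S g /\ (forall g', S g' -> semF psi (upd sigma X S) g')
  | Svar X => sigma X
  end.

Definition produces (Act : finType) (Proc : Type)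
  (step : Proc -> option Act -> Proc -> Prop) (p : Proc) (g : fin_trace Act) : Prop :=
  match g with
  | Tfin s => exists q, wsteps step p s q
  | Tinf f => exists ps : nat -> Proc, ps 0 = p /\ forall i, wstep step (ps i) (f i) (ps i.+1)
  end.

(* closed formulas: the environment is irrelevant; use the empty one *)
Definition semB_closed (Act : finType) (Proc : Type)
  (step : Proc -> option Act -> Proc -> Prop) (phi : shml Act) : Proc -> Prop :=
  semB step phi (fun _ _ => False).
Definition semF_closed (Act : finType) (phi : shml Act) : fin_trace Act -> Prop :=
  semF phi (fun _ _ => False).

From mathcomp Require Import all_boot.

Set Implicit Arguments.
Unset Strict Implicit.

(* The proof is a single structural induction on the formula, run under two
   environments at once: a process environment [rho] and a trace environment
   [sigma].  We say the pair is sound when every process in [rho X] produces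
   only traces of [sigma X], and complete when every process producing only
   traces of [sigma X] lies in [rho X].  Soundness of the environments gives
   the direction (i) => (ii) for every formula, completeness the direction
   (ii) => (i).  The modal case rests on how trace production interacts with
   [tcons] (a trace [a g] is produced by [p] iff [p =a=> q] for some [q]
   producing [g]); the fixpoint cases rest on monotonicity of the trace
   semantics in the environment, which makes the union of all post-fixed
   points itself post-fixed.  The main theorem instantiates both environments
   by the empty one, which is sound trivially and complete because every
   process produces the empty trace. *)

Section TraceProduction.
Variables (Act : finType) (Proc : Type) (step : Proc -> option Act -> Proc -> Prop).

Lemma produces_nil (p : Proc) : produces step p (Tfin [::]).
Proof. by exists p. Qed.

Lemma produces_tcons_inv (p : Proc) (a : Act) (g g' : fin_trace Act) :
  produces step p g -> g = tcons a g' ->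
  exists q, wstep step p a q /\ produces step q g'.
Proof.
case: g' => [s|f] /=; case: g => [s'|f'] //=.
- move=> [q p_q] [s'E]; rewrite s'E in p_q; case: p_q => r [p_r r_q].
  by exists r; split => //; exists q.
- move=> [ps [ps0 ps_step]] [f'E].
  have -> : a = f' 0 by rewrite f'E.
  have f_shift i : f i = f' i.+1 by rewrite f'E.
  exists (ps 1); split; first by rewrite -ps0.
  by exists (fun n => ps n.+1); split => // i; rewrite f_shift.
Qed.

Lemma produces_tcons (p q : Proc) (a : Act) (g : fin_trace Act) :
  wstep step p a q -> produces step q g -> produces step p (tcons a g).
Proof.
case: g => [s|f] /= p_q.
- by move=> [r q_r]; exists r, q.
- move=> [ps [ps0 ps_step]].
  exists (fun n => if n is k.+1 then ps k else p); split => // -[|i] /=.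
  + by rewrite ps0.
  + exact: ps_step.
Qed.

End TraceProduction.

Section TraceSemantics.
Variable Act : finType.

Lemma semF_mono (phi : shml Act) (sigma1 sigma2 : nat -> fin_trace Act -> Prop)
    (g : fin_trace Act) :
  (forall X h, sigma1 X h -> sigma2 X h) -> semF phi sigma1 g -> semF phi sigma2 g.
Proof.
elim: phi sigma1 sigma2 g => [|| A psi IH | psi IH1 chi IH2 | X psi IH | X]
  sigma1 sigma2 g sub12 //=.
- by move=> H a aA g' g_eq; apply: (IH sigma1) => //; exact: H g_eq.
- by move=> [H1 H2]; split; [exact: (IH1 sigma1) | exact: (IH2 sigma1)].
- move=> [S [Sg postS]]; exists S; split => // g' Sg'.
  apply: (IH (upd sigma1 X S)); last exact: postS.
  by move=> Y h; rewrite /upd; case: (Y == X) => //; exact: sub12.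
- exact: sub12.
Qed.

(* The union of all post-fixed points of [S |-> semF psi (upd sigma X S)] is
   itself post-fixed: it is the greatest fixpoint [max X. psi]. *)
Lemma semF_max_postfixed (X : nat) (psi : shml Act)
    (sigma : nat -> fin_trace Act -> Prop) (h : fin_trace Act) :
  let T := semF (Smax X psi) sigma in
  T h -> semF psi (upd sigma X T) h.
Proof.
move=> T [S [Sh postS]]; apply: (semF_mono (sigma1 := upd sigma X S)); last exact: postS.
by move=> Y k; rewrite /upd; case: (Y == X) => // Sk; exists S.
Qed.

End TraceSemantics.

Section Correspondence.
Variables (Act : finType) (Proc : Type) (step : Proc -> option Act -> Proc -> Prop).

Definition all_traces (P : fin_trace Act -> Prop) (q : Proc) : Prop :=
  forall g, produces step q g -> P g.

Definition env_sound (rho : nat -> Proc -> Prop) (sigma : nat -> fin_trace Act -> Prop) :=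
  forall X q, rho X q -> all_traces (sigma X) q.

Definition env_complete (rho : nat -> Proc -> Prop) (sigma : nat -> fin_trace Act -> Prop) :=
  forall X q, all_traces (sigma X) q -> rho X q.

(* (i) => (ii) under a sound pair of environments.  For [max X. psi], the
   post-fixed set [S] of processes is matched by the set of traces its
   members produce. *)
Lemma semB_all_traces (phi : shml Act) rho sigma (p : Proc) :
  env_sound rho sigma -> semB step phi rho p -> all_traces (semF phi sigma) p.
Proof.
elim: phi rho sigma p => [|| A psi IH | psi IH1 chi IH2 | X psi IH | X]
  rho sigma p sound //=.
- move=> H g pg a aA g' g_eq.
  have [q [p_q qg']] := produces_tcons_inv pg g_eq.
  exact: (IH rho sigma q sound (H a aA q p_q)).
- by move=> [H1 H2] g pg; split; [exact: (IH1 rho sigma p) | exact: (IH2 rho sigma p)].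
- move=> [S [Sp postS]] g pg.
  exists (fun h => exists q, S q /\ produces step q h); split; first by exists p.
  move=> g' [q [Sq qg']].
  apply: (IH (upd rho X S) _ q _ (postS q Sq) g' qg') => Y r.
  rewrite /upd; case: (Y == X); last exact: sound.
  by move=> Sr h rh; exists r.
- exact: sound.
Qed.

(* (ii) => (i) under a complete pair of environments.  For [max X. psi], the
   set of processes all of whose traces satisfy [max X. psi] is post-fixed. *)
Lemma all_traces_semB (phi : shml Act) rho sigma (p : Proc) :
  env_complete rho sigma -> all_traces (semF phi sigma) p -> semB step phi rho p.
Proof.
elim: phi rho sigma p => [|| A psi IH | psi IH1 chi IH2 | X psi IH | X]
  rho sigma p complete H //=.
- exact: (H _ (produces_nil step p)).
- move=> a aA q p_q; apply: (IH rho sigma q complete) => g qg.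
  exact: (H _ (produces_tcons p_q qg) a aA g erefl).
- by split; [apply: (IH1 rho sigma) | apply: (IH2 rho sigma)] => // g pg; case: (H g pg).
- pose T := semF (Smax X psi) sigma.
  exists (all_traces T); split; first exact: H.
  move=> q qT; apply: (IH _ (upd sigma X T)).
  + by move=> Y r; rewrite /upd; case: (Y == X) => //; exact: complete.
  + by move=> g qg; apply: semF_max_postfixed; exact: qT.
- exact: complete.
Qed.

Lemma env_sound_empty : env_sound (fun _ _ => False) (fun _ _ => False).
Proof. by []. Qed.

Lemma env_complete_empty : env_complete (fun _ _ => False) (fun _ _ => False).
Proof. by move=> X q; apply; exact: produces_nil. Qed.

End Correspondence.

Theorem mainTheorem17 (Act : finType) (Proc : Type)
  (step : Proc -> option Act -> Proc -> Prop) (p : Proc) (phi : shml Act) :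
  shml_closed phi -> guarded phi ->
  (semB_closed step phi p <->
   (forall g : fin_trace Act, produces step p g -> semF_closed phi g)).
Proof.
move=> _ _; split.
- exact: semB_all_traces (@env_sound_empty Act Proc step).
- exact: all_traces_semB (@env_complete_empty Act Proc step).
Qed.
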